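(* Let $T$ be a valid set such that there is a unique pair $(\alpha',\beta')\in T$ with $\gamma_{\alpha',\beta'}=\Gamma_T$. Then $n^{-1}|\mathcal{E}_T(\{(\alpha',\beta')\})\cap[n]|\to1$ as $n\to\infty$; that is, almost every $n$ has $\mathcal{S}_T(n)=\{(\alpha',\beta')\}$.
   Context: For relatively prime positive integers $\alpha,\beta$ and positive integers $a_1,a_2$, the $(\alpha,\beta)$-walk $w^{\alpha,\beta}_k(a_1,a_2)$ is given by $w_1=a_1$, $w_2=a_2$, $w_{k+2}=\alpha w_{k+1}+\beta w_k$ ($k\ge1$). For a positive integer $n$, $s^{\alpha,\beta}(n;a_1,a_2)$ is the (largest) index $s$ with $w^{\alpha,\beta}_s(a_1,a_2)=n$ ($-\infty$ if none), and $s^{\alpha,\beta}(n)=\max_{a_1,a_2\ge1}s^{\alpha,\beta}(n;a_1,a_2)$. $\gamma_{\alpha,\beta}=\frac12(\alpha+\sqrt{\alpha^2+4\beta})$. A set $T$ is valid if $T\subseteq\{(\alpha,\beta):\alpha,\beta\ge1,\gcd(\alpha,\beta)=1\}$. For valid $T$: $\bar s_T(n)=\max_{(\alpha,\beta)\in T}s^{\alpha,\beta}(n)$, $\mathcal{S}_T(n)=\{(\alpha,\beta)\in T:s^{\alpha,\beta}(n)=\bar s_T(n)\}$, $\Gamma_T=\min\{\gamma_{\alpha,\beta}:(\alpha,\beta)\in T\}$, and for a set $S$ of pairs $\mathcal{E}_T(S)=\{n\ge1:S=\mathcal{S}_T(n)\}$. $[n]=\{1,\dots,n\}$. *)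

From HB Require Import structures.
From mathcomp Require Import all_boot all_order all_algebra.
From mathcomp Require Import all_classical all_reals all_analysis.
Set Implicit Arguments. Unset Strict Implicit. Unset Printing Implicit Defensive.
Import Order.TTheory GRing.Theory Num.Theory.

(* (w_{k+1}, w_{k+2}) of the (alpha,beta)-walk starting at a1, a2. *)
Fixpoint walk_pair (alpha beta a1 a2 : nat) (k : nat) : nat * nat :=
  match k with
  | 0 => (a1, a2)
  | k'.+1 => let: (x, y) := walk_pair alpha beta a1 a2 k' in
             (y, (alpha * y + beta * x)%N)
  end.

(* walk alpha beta a1 a2 k = w^{alpha,beta}_k(a1,a2) for k >= 1
   (w_1 = a1, w_2 = a2, w_{k+2} = alpha w_{k+1} + beta w_k). *)
Definition walk (alpha beta a1 a2 k : nat) : nat :=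
  (walk_pair alpha beta a1 a2 k.-1).1.

(* is_s alpha beta n m  :<->  s^{alpha,beta}(n) = m, i.e. m is the largest
   index k >= 1 such that w_k(a1,a2) = n for some a1, a2 >= 1. *)
Definition is_s (alpha beta n m : nat) : Prop :=
  (exists a1 a2, [/\ 1 <= a1, 1 <= a2, 1 <= m & walk alpha beta a1 a2 m = n])
  /\ (forall a1 a2 k, 1 <= a1 -> 1 <= a2 -> 1 <= k ->
        walk alpha beta a1 a2 k = n -> k <= m)%N.

Definition valid (T : set (nat * nat)) : Prop :=
  forall p, T p -> [/\ 1 <= p.1, 1 <= p.2 & coprime p.1 p.2]%N.

(* is_sbar T n m  :<->  \bar s_T(n) = m  (max over T of s^{alpha,beta}(n)). *)
Definition is_sbar (T : set (nat * nat)) (n m : nat) : Prop :=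
  (exists p, T p /\ is_s p.1 p.2 n m)
  /\ (forall p m', T p -> is_s p.1 p.2 n m' -> m' <= m)%N.

Definition in_S (T : set (nat * nat)) (n : nat) (p : nat * nat) : Prop :=
  T p /\ exists m, is_sbar T n m /\ is_s p.1 p.2 n m.

Definition in_E (T : set (nat * nat)) (S : set (nat * nat)) (n : nat) : Prop :=
  (1 <= n)%N /\ (forall p, S p <-> in_S T n p).

Definition gamma {R : realType} (p : nat * nat) : R :=
  (p.1%:R + Num.sqrt (p.1%:R ^+ 2 + 4 * p.2%:R)) / 2.

Definition count_E (T S : set (nat * nat)) (n : nat) : nat :=
  (\sum_(1 <= i < n.+1 | `[< in_E T S i >]) 1)%N.

(* Let g = gamma p'.  For a pair p let U_j, V_j be the walks of p started at
   (1, 0) and (0, 1): every walk satisfies w_{j+1}(a1, a2) = a1 U_j + a2 V_j,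
   U_j and V_j are coprime, and U_j, V_j <= gamma(p)^j.  Given N and eps > 0,
   pick j with g^(2j) ~ eps N.  By the Frobenius coin bound, every n > U_j V_j
   (which excludes at most eps N of the n <= N) is a walk value of p' at index j.
   A pair q with gamma q >= g^3 has no walk value <= N at index j, and each of
   the finitely many other q <> p' in T, all with gamma q > g, takes at most
   N^2 / (U_j V_j) = O(N (g / gamma q)^(2j) / eps) = o(N) such values.  For any
   other n <= N, every q <> p' has s^q(n) <= j < s^p'(n), so S_T(n) = {p'}. *)

From HB Require Import structures.
From mathcomp Require Import all_boot all_order all_algebra.
From mathcomp Require Import all_classical all_reals all_analysis.
From mathcomp Require Import zify ring lra.
Set Implicit Arguments. Unset Strict Implicit. Unset Printing Implicit Defensive.
Import Order.TTheory GRing.Theory Num.Theory.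
Import numFieldNormedType.Exports.
Local Open Scope classical_set_scope.

(* [walk_seq al be a1 a2 j] is w_{j+1}(a1, a2): indices start at 0. *)
Definition walk_seq (al be a1 a2 j : nat) : nat := (walk_pair al be a1 a2 j).1.

Notation walkU al be := (walk_seq al be 1 0).
Notation walkV al be := (walk_seq al be 0 1).

Section Walk.
Variables (al be : nat).

Lemma walk_seq0 a1 a2 : walk_seq al be a1 a2 0 = a1. Proof. by []. Qed.
Lemma walk_seq1 a1 a2 : walk_seq al be a1 a2 1 = a2. Proof. by []. Qed.

Lemma walk_seqSS a1 a2 j :
  walk_seq al be a1 a2 j.+2 = al * walk_seq al be a1 a2 j.+1 + be * walk_seq al be a1 a2 j.
Proof.
have snd k : (walk_pair al be a1 a2 k).2 = walk_seq al be a1 a2 k.+1.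
  by rewrite /walk_seq /=; case: (walk_pair _ _ _ _ _).
by rewrite {1}/walk_seq /= -!snd /walk_seq /=; case: (walk_pair _ _ _ _ _).
Qed.

Lemma walk_seq_shift a1 a2 j :
  walk_seq al be a1 a2 j.+1 = walk_seq al be a2 (al * a2 + be * a1) j.
Proof.
rewrite /walk_seq; congr fst.
elim: j => [|j IH] //.
have unfoldS k : walk_pair al be a1 a2 k.+1 =
  let: (x, y) := walk_pair al be a1 a2 k in (y, al * y + be * x) by [].
by rewrite unfoldS IH.
Qed.

Lemma walk_seq_lin a1 a2 j :
  walk_seq al be a1 a2 j = a1 * walkU al be j + a2 * walkV al be j.
Proof.
suff [] : walk_seq al be a1 a2 j = a1 * walkU al be j + a2 * walkV al be j /\
  walk_seq al be a1 a2 j.+1 = a1 * walkU al be j.+1 + a2 * walkV al be j.+1 by [].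
elim: j => [|j [IH1 IH2]]; first by rewrite !walk_seq0 !walk_seq1; lia.
by split=> //; rewrite !walk_seqSS IH1 IH2; lia.
Qed.

Lemma walkU_S j : walkU al be j.+1 = be * walkV al be j.
Proof. by rewrite walk_seq_shift walk_seq_lin; lia. Qed.

Lemma walkV_S j : walkV al be j.+1 = walkU al be j + al * walkV al be j.
Proof. by rewrite walk_seq_shift walk_seq_lin; lia. Qed.

Lemma coprime_walkUV : coprime al be ->
  forall j, 0 < j -> coprime (walkU al be j) (walkV al be j).
Proof.
move=> co_ab; suff H j : [/\ coprime (walkU al be j.+1) (walkV al be j.+1),
  coprime be (walkV al be j.+1) & be %| walkU al be j.+1] by case=> // j _; case: (H j).
elim: j => [|j [coUV coV dvdU]].
  by rewrite !walk_seq1 /coprime !gcdn1 dvdn0.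
have coV' : coprime be (walkV al be j.+2).
  rewrite walkV_S; case/dvdnP: dvdU => k ->.
  by rewrite /coprime gcdnMDl -/(coprime _ _) coprimeMr coprime_sym co_ab.
split=> //; last by rewrite walkU_S dvdn_mulr.
rewrite walkU_S coprimeMl coV' /=.
by rewrite (walkV_S j.+1) /coprime addnC gcdnMDl -/(coprime _ _) coprime_sym coUV.
Qed.

Lemma walkV_gt0 j : 0 < al -> 0 < walkV al be j.+1.
Proof.
move=> al_gt0; elim: j => [|j IH]; first by rewrite walk_seq1.
by rewrite walkV_S; apply: leq_trans (leq_addl _ _); rewrite muln_gt0 al_gt0.
Qed.

Lemma walkU_gt0 j : 0 < al -> 0 < be -> 0 < walkU al be j.+2.
Proof. by move=> al_gt0 be_gt0; rewrite walkU_S muln_gt0 be_gt0 walkV_gt0. Qed.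

Lemma walk_seq_ge_index a1 a2 j :
  0 < al -> 0 < be -> 0 < a1 -> 0 < a2 -> j <= walk_seq al be a1 a2 j.
Proof.
move=> al_gt0 be_gt0 a1_gt0 a2_gt0.
suff H k : 0 < walk_seq al be a1 a2 k /\ k < walk_seq al be a1 a2 k.+1.
  by case: j => [|j] //; case: (H j).
elim: k => [|k [IH1 IH2]]; first by rewrite walk_seq0 walk_seq1.
by split; rewrite ?walk_seqSS; nia.
Qed.

End Walk.

Definition pos_comb (U V n : nat) : Prop :=
  exists a1 a2, [/\ 0 < a1, 0 < a2 & a1 * U + a2 * V = n].

Lemma frobenius_pos_comb U V n : 0 < U -> 0 < V -> coprime U V -> U * V < n ->
  pos_comb U V n.
Proof.
move=> U0 V0 coUV ltUVn.
(* a1 := (n km - 1) mod V + 1, where km U = 1 (mod V), so that a1 U = n (mod V). *)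
case: (egcdnP V U0) => km kn Bezout _.
move: coUV Bezout; rewrite /coprime => /eqP -> Bezout.
have km0 : 0 < km by case: km Bezout => //=; lia.
set t := n * km - 1.
have t_eq := divn_eq t V; have r_lt := ltn_pmod t V0.
set q := t %/ V in t_eq; set r := t %% V in t_eq r_lt.
have comb : r.+1 * U + q * U * V = n + n * kn * V.
  have tS : t.+1 = n * km by rewrite /t; nia.
  have : r.+1 * U + q * V * U = n * km * U by rewrite -tS t_eq; nia.
  have : n * km * U = n * (kn * V + 1) by rewrite -Bezout mulnA.
  nia.
by exists r.+1, (q * U - n * kn); split=> //; nia.
Qed.

Lemma count_pos_comb_le U V N : 0 < U -> 0 < V ->
  \sum_(1 <= n < N.+1 | `[< pos_comb U V n >]) 1 <= (N %/ U) * (N %/ V).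
Proof.
move=> U0 V0.
pose hits n (a : 'I_(N %/ U)) (b : 'I_(N %/ V)) : nat := a.+1 * U + b.+1 * V == n.
apply: (@leq_trans (\sum_(1 <= n < N.+1) \sum_a \sum_b hits n a b)).
  rewrite big_mkcond big_nat [X in _ <= X]big_nat /=; apply: leq_sum => n /andP[_ lenN].
  case: asboolP => // -[a1 [a2 [a1_gt0 a2_gt0 n_eq]]]; subst n.
  have a1_lt : a1.-1 < N %/ U by rewrite prednK // leq_divRL //; nia.
  have a2_lt : a2.-1 < N %/ V by rewrite prednK // leq_divRL //; nia.
  rewrite (bigD1 (Ordinal a1_lt)) // (bigD1 (Ordinal a2_lt)) //=.
  by rewrite /hits /= !prednK // eqxx -addnA leq_addr.
apply: (@leq_trans (\sum_(a < N %/ U) \sum_(b < N %/ V) 1)); last first.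
  by rewrite sum_nat_const card_ord sum_nat_const card_ord muln1.
rewrite exchange_big; apply: leq_sum => a _; rewrite exchange_big; apply: leq_sum => b _.
rewrite -big_mkcond /= sum1_count /= -(@eq_count _ (pred1 (a.+1 * U + b.+1 * V))).
  by rewrite count_uniq_mem ?iota_uniq ?leq_b1.
by move=> n /=; rewrite eq_sym.
Qed.

Lemma sum_leq_indicator_le N M : \sum_(1 <= n < N.+1) (n <= M) <= M.
Proof.
have -> : \sum_(1 <= n < N.+1) (n <= M) = minn N M; last exact: geq_minr.
elim: N => [|N IH]; first by rewrite big_geq // min0n.
by rewrite big_nat_recr //= IH; case: leqP; lia.
Qed.

Lemma count_E_le T S N : count_E T S N <= N.
Proof.
rewrite /count_E big_mkcond /=; apply: leq_trans (_ : \sum_(1 <= i < N.+1) 1 <= N).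
  by apply: leq_sum => i _; case: ifP.
by rewrite sum_nat_const_nat subn1 muln1.
Qed.

Definition hit (p : nat * nat) (n j : nat) : Prop :=
  exists a1 a2, [/\ 0 < a1, 0 < a2 & walk_seq p.1 p.2 a1 a2 j = n].

Lemma hitE p n j : hit p n j <-> pos_comb (walkU p.1 p.2 j) (walkV p.1 p.2 j) n.
Proof.
by split=> -[a1 [a2 [a1_gt0 a2_gt0 <-]]]; exists a1, a2; rewrite (walk_seq_lin _ _ a1 a2).
Qed.

Section Hit.
Variables (p : nat * nat) (n : nat).
Hypotheses (p1_gt0 : 0 < p.1) (p2_gt0 : 0 < p.2).

Lemma hitW j k : j <= k -> hit p n k -> hit p n j.
Proof.
move=> /subnK <-; elim: (k - j) => [//|i IH] [a1 [a2 [a1_gt0 a2_gt0 walk_n]]].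
apply: IH; exists a2, (p.1 * a2 + p.2 * a1).
by split; rewrite -?walk_seq_shift //; nia.
Qed.

Lemma hit_index_le j : hit p n j -> j <= n.
Proof. by move=> [a1 [a2 [a1_gt0 a2_gt0 <-]]]; exact: walk_seq_ge_index. Qed.

Lemma is_sP m : is_s p.1 p.2 n m <->
  [/\ 0 < m, hit p n m.-1 & forall k, hit p n k -> k < m].
Proof.
split=> [[[a1 [a2 [a1_gt0 a2_gt0 m_gt0 walk_n]]] m_max]|[m_gt0 hit_m m_max]].
  split=> //; first by exists a1, a2.
  by move=> k [b1 [b2 [b1_gt0 b2_gt0 walk_k]]]; apply: (m_max b1 b2 k.+1).
split; first by case: hit_m => a1 [a2 [a1_gt0 a2_gt0 walk_n]]; exists a1, a2.
move=> a1 a2 [//|k] a1_gt0 a2_gt0 _ walk_n.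
by apply: m_max; exists a1, a2.
Qed.

Lemma exists_is_s j : hit p n j -> exists2 m, j < m & is_s p.1 p.2 n m.
Proof.
move=> hit_j; have hit_ex : exists k, `[< hit p n k >] by exists j; apply/asboolP.
have [k /asboolP hit_k k_max] := ex_maxnP hit_ex (fun k hk => hit_index_le (asboolW hk)).
exists k.+1; first by rewrite ltnS k_max //; apply/asboolP.
by apply/is_sP; split=> // i /asboolP /k_max.
Qed.

End Hit.

Lemma in_E_unique_hit (T : set (nat * nat)) p n j : valid T -> T p -> 0 < n ->
  hit p n j -> (forall q, T q -> q <> p -> ~ hit q n j) -> in_E T [set p] n.
Proof.
move=> vT Tp n_gt0 hit_p no_hit.
have [p1_gt0 p2_gt0 _] := vT p Tp.
have [m j_lt_m s_p] := exists_is_s p1_gt0 p2_gt0 hit_p.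
have s_other q m' : T q -> q <> p -> is_s q.1 q.2 n m' -> m' <= j.
  move=> Tq q_neq /is_sP [m'_gt0 hit_q _]; have [q1_gt0 q2_gt0 _] := vT q Tq.
  rewrite leqNgt; apply/negP => j_lt_m'; apply: (no_hit q Tq q_neq).
  by apply: (hitW q1_gt0 q2_gt0 _ hit_q); lia.
have s_uniq m' : is_s p.1 p.2 n m' -> m' = m.
  move=> /is_sP [m'_gt0 hit_m' max_m']; have /is_sP [m_gt0 hit_m max_m] := s_p.
  by have := max_m _ hit_m'; have := max_m' _ hit_m; lia.
have sbar : is_sbar T n m.
  split=> [|q m' Tq]; first by exists p.
  have [->|q_neq] := eqVneq q p; first by move/s_uniq ->.
  by move/(s_other q m' Tq (elimN eqP q_neq)); lia.
split=> // q; split=> [->|[Tq [m' [[_ m'_max] s_q]]]]; first by split=> //; exists m.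
have [//|q_neq] := eqVneq q p.
have := s_other q m' Tq (elimN eqP q_neq) s_q; have := m'_max p m Tp s_p; lia.
Qed.

Local Open Scope ring_scope.

Lemma linrec_le (R : numDomainType) (a b : R) (f h : nat -> R) :
  0 <= a -> 0 <= b ->
  (forall j, f j.+2 = a * f j.+1 + b * f j) ->
  (forall j, h j.+2 = a * h j.+1 + b * h j) ->
  f 0%N <= h 0%N -> f 1%N <= h 1%N -> forall j, f j <= h j.
Proof.
move=> a_ge0 b_ge0 f_rec h_rec le0 le1 j.
suff [] : f j <= h j /\ f j.+1 <= h j.+1 by [].
elim: j => [|j [IH1 IH2]]; split=> //.
by rewrite f_rec h_rec lerD // ler_wpM2l.
Qed.

Section Gamma.
Variables (R : realType) (p : nat * nat).
Local Notation g := (gamma p : R).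

Lemma gamma_sqr : g ^+ 2 = p.1%:R * g + p.2%:R.
Proof.
rewrite /gamma; set s := Num.sqrt _.
have : s ^+ 2 = p.1%:R ^+ 2 + 4 * p.2%:R by rewrite sqr_sqrtr // addr_ge0 // mulr_ge0.
nra.
Qed.

Lemma gamma_ge_fst : p.1%:R <= g.
Proof.
have : p.1%:R <= Num.sqrt (p.1%:R ^+ 2 + 4 * p.2%:R) :> R.
  by rewrite -{1}(ger0_norm (ler0n R p.1)) -sqrtr_sqr ler_sqrt ?lerDl ?addr_ge0 ?mulr_ge0.
by rewrite /gamma; lra.
Qed.

Lemma gamma_ge0 : 0 <= g.
Proof. exact: le_trans (ler0n _ _) gamma_ge_fst. Qed.

Lemma gamma_le_add : g <= (p.1 + p.2)%:R.
Proof.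
have : Num.sqrt (p.1%:R ^+ 2 + 4 * p.2%:R) <= (p.1 + 2 * p.2)%:R :> R.
  rewrite -(ger0_norm (ler0n R (p.1 + 2 * p.2))) -sqrtr_sqr ler_sqrt ?exprn_ge0 //.
  have : (p.2 <= p.2 ^ 2)%N by nia.
  rewrite -(ler_nat R) natrX natrD natrM => p2_le.
  have := ler0n R p.1; have := ler0n R p.2; nra.
by rewrite /gamma !(natrD, natrM); lra.
Qed.

Lemma snd_le_gamma_sqr : p.2%:R <= g ^+ 2.
Proof. by rewrite gamma_sqr lerDr mulr_ge0 ?gamma_ge0. Qed.

Hypotheses (p1_gt0 : (0 < p.1)%N) (p2_gt0 : (0 < p.2)%N).

Lemma gamma_ge1 : 1 <= g.
Proof. by apply: le_trans gamma_ge_fst; rewrite ler1n. Qed.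

Lemma gamma_gt0 : 0 < g.
Proof. exact: lt_le_trans ltr01 gamma_ge1. Qed.

Lemma gamma_sqr_ge2 : 2 <= g ^+ 2.
Proof.
rewrite gamma_sqr; have := gamma_ge1.
have : 1 <= p.1%:R :> R by rewrite ler1n.
have : 1 <= p.2%:R :> R by rewrite ler1n.
nra.
Qed.

Lemma gamma_gt1 : 1 < g.
Proof. by have := gamma_sqr_ge2; have := gamma_ge1; nra. Qed.

Lemma gamma_expSS j : g ^+ j.+2 = p.1%:R * g ^+ j.+1 + p.2%:R * g ^+ j.
Proof. by rewrite !exprS mulrA -expr2 gamma_sqr; ring. Qed.

Lemma natr_walk_seqSS a1 a2 j :
  (walk_seq p.1 p.2 a1 a2 j.+2)%:R =
  p.1%:R * (walk_seq p.1 p.2 a1 a2 j.+1)%:R + p.2%:R * (walk_seq p.1 p.2 a1 a2 j)%:R :> R.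
Proof. by rewrite walk_seqSS natrD !natrM. Qed.

Lemma gamma_exp_le_walk a1 a2 j : (0 < a1)%N -> (0 < a2)%N ->
  g ^+ j <= g * (walk_seq p.1 p.2 a1 a2 j)%:R.
Proof.
move=> a1_gt0 a2_gt0.
apply: (linrec_le (h := fun j => g * (walk_seq p.1 p.2 a1 a2 j)%:R) (ler0n _ _) (ler0n _ _)).
- exact: gamma_expSS.
- by move=> k; rewrite natr_walk_seqSS; ring.
- by rewrite /= expr0 walk_seq0 mulr_ege1 ?ler1n ?gamma_ge1.
- by rewrite /= expr1 walk_seq1 ler_peMr ?gamma_ge0 ?ler1n.
Qed.

Lemma walkU_ge i : g ^+ i <= g * (walkU p.1 p.2 i.+2)%:R.
Proof.
apply: le_trans (gamma_exp_le_walk i (ltn0Sn 0) (ltn0Sn 0)) _.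
rewrite ler_wpM2l ?gamma_ge0 // ler_nat walkU_S walkV_S walk_seq_lin.
by apply: leq_trans (leq_pmull _ p2_gt0); rewrite !mul1n leq_add2l leq_pmull.
Qed.

Lemma walkV_ge i : g ^+ i <= g * (walkV p.1 p.2 i.+2)%:R.
Proof.
have le_gS : g ^+ i <= g ^+ i.+1 by rewrite exprS ler_peMl ?exprn_ge0 ?gamma_ge0 ?gamma_ge1.
apply: le_trans le_gS (le_trans (gamma_exp_le_walk i.+1 (ltn0Sn 0) (ltn0Sn 0)) _).
rewrite ler_wpM2l ?gamma_ge0 // ler_nat (walkV_S _ _ i.+1) walk_seq_lin.
by rewrite !mul1n leq_add2l leq_pmull.
Qed.

Lemma walkU_le j : (walkU p.1 p.2 j)%:R <= g ^+ j.
Proof.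
apply: (linrec_le (f := fun j => (walkU p.1 p.2 j)%:R) (ler0n _ _) (ler0n _ _)) => //.
- by move=> k; exact: natr_walk_seqSS.
- exact: gamma_expSS.
- by rewrite expr1 gamma_ge0.
Qed.

Lemma walkV_le j : (walkV p.1 p.2 j)%:R <= g ^+ j.
Proof.
apply: (linrec_le (f := fun j => (walkV p.1 p.2 j)%:R) (ler0n _ _) (ler0n _ _)) => //.
- by move=> k; exact: natr_walk_seqSS.
- exact: gamma_expSS.
- by rewrite /= expr1 gamma_ge1.
Qed.

End Gamma.

Lemma near_mulr_exp_le (R : realType) (x y C d : R) : 0 <= x -> x < y -> 0 < C -> 0 < d ->
  \forall i \near \oo, C * x ^+ i <= d * y ^+ i.
Proof.
move=> x_ge0 lt_xy C_gt0 d_gt0; have y_gt0 : 0 < y by apply: le_lt_trans lt_xy.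
have ratio_lt1 : `|x / y| < 1.
  by rewrite ger0_norm ?divr_ge0 ?(ltW y_gt0) // ltr_pdivrMr // mul1r.
have dC_gt0 : 0 < d / C by rewrite divr_gt0.
move/cvgrPdist_le : (cvg_expr ratio_lt1) => /(_ _ dC_gt0).
apply: filterS => i; rewrite sub0r normrN ger0_norm; last first.
  by rewrite exprn_ge0 // divr_ge0 // ltW.
rewrite expr_div_n ler_pdivrMr ?exprn_gt0 // => le_xy.
rewrite mulrC; apply: le_trans (ler_wpM2r (ltW C_gt0) le_xy) _.
by rewrite mulrAC divfK // gt_eqF.
Qed.

Lemma exists_exp_bracket (R : realType) (x y : R) i0 : 2 <= x -> x ^+ i0 <= y ->
  exists2 i, (i0 <= i)%N & x ^+ i <= y < x ^+ i.+1.
Proof.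
move=> x_ge2 le_y; have x_ge0 : 0 <= x by apply: le_trans x_ge2.
have y_ge0 : 0 <= y by apply: le_trans le_y; rewrite exprn_ge0.
have bounded k : `[< x ^+ k <= y >] -> (k <= Num.truncn y)%N.
  move/asboolP => le_k; rewrite truncn_ge_nat //; apply: le_trans le_k.
  apply: le_trans (_ : (2 ^ k)%:R <= _); first by rewrite ler_nat ltnW // ltn_expl.
  by rewrite natrX lerXn2r ?nnegrE.
have [i /asboolP le_i i_max] := ex_maxnP (ex_intro _ i0 (asboolT le_y)) bounded.
exists i; first exact/i_max/asboolT.
by rewrite le_i ltNge; apply/negP => /asboolT/i_max; rewrite ltnn.
Qed.

Lemma gamma_exp3_le (R : realType) (p q : nat * nat) :
  let A := ((p.1 + p.2) ^ 3)%N in ~~ ((q.1 <= A) && (q.2 <= A ^ 2))%N ->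
  gamma p ^+ 3 <= gamma q :> R.
Proof.
move=> A out_box.
have le_A : gamma p ^+ 3 <= A%:R :> R.
  by rewrite natrX lerXn2r ?nnegrE ?gamma_ge0 ?gamma_le_add.
case/nandP: out_box; rewrite -ltnNge => lt_A.
  by apply: le_trans le_A (le_trans _ (gamma_ge_fst R q)); rewrite ler_nat ltnW.
rewrite -(@ler_pXn2r _ 2) ?nnegrE ?exprn_ge0 ?gamma_ge0 //.
apply: le_trans (snd_le_gamma_sqr R q); apply: le_trans (_ : (A ^ 2)%:R <= _).
  by rewrite natrX lerXn2r ?nnegrE ?exprn_ge0 ?gamma_ge0.
by rewrite ler_nat ltnW.
Qed.

Lemma count_hit_le (R : realType) (q : nat * nat) N i : (0 < q.1)%N -> (0 < q.2)%N ->
  (\sum_(1 <= n < N.+1 | `[< hit q n i.+2 >]) 1)%N%:R * (gamma q ^+ 2) ^+ i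
    <= N%:R ^+ 2 * gamma q ^+ 2 :> R.
Proof.
move=> q1_gt0 q2_gt0; set c : R := gamma q.
set U := walkU q.1 q.2 i.+2; set V := walkV q.1 q.2 i.+2.
have c_gt0 : 0 < c := gamma_gt0 R q1_gt0.
have U_ge : c ^+ i <= c * U%:R := walkU_ge R q1_gt0 q2_gt0 i.
have V_ge : c ^+ i <= c * V%:R := walkV_ge R q1_gt0 i.
have count_le := count_pos_comb_le N (walkU_gt0 i q1_gt0 q2_gt0) (walkV_gt0 q.2 i.+1 q1_gt0).
rewrite (eq_bigl _ _ (fun n => asbool_equiv_eq (hitE q n i.+2))).
apply: le_trans (_ : ((N %/ U) * (N %/ V))%:R * (c ^+ 2 * (U * V)%:R) <= _).
  rewrite ler_pM ?exprn_ge0 ?ler_nat ?(ltW c_gt0) //.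
  by rewrite exprAC natrM expr2 mulrACA ler_pM ?exprn_ge0 ?(ltW c_gt0).
rewrite mulrCA -natrM mulrC -natrX ler_wpM2r ?exprn_ge0 ?(ltW c_gt0) // ler_nat.
by rewrite mulnACA -mulnn leq_mul // leq_divM.
Qed.

Section Density.
Variables (R : realType) (T : set (nat * nat)) (p : nat * nat).
Hypotheses (vT : valid T) (Tp : T p)
  (gamma_min : forall q, T q -> gamma p <= gamma q :> R)
  (gamma_uniq : forall q, T q -> gamma q = gamma p :> R -> q = p).

Local Notation g := (gamma p : R).
Local Notation A := ((p.1 + p.2) ^ 3)%N.
Local Notation box := ('I_A.+1 * 'I_(A ^ 2).+1)%type.
Let box_pair (x : box) : nat * nat := (x.1 : nat, x.2 : nat).
Let in_box q := ((q.1 <= A) && (q.2 <= A ^ 2))%N.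
Let rival q := T q /\ q <> p.
Let rival_hits (x : box) (N j : nat) : nat :=
  \sum_(1 <= n < N.+1) `[< rival (box_pair x) /\ hit (box_pair x) n j >].

Let K : R := (A.+1 * (A ^ 2).+1)%:R.
Let K_gt0 : 0 < K. Proof. by rewrite ltr0n. Qed.
Let rivals_dominated (eps : R) i := forall x : box, rival (box_pair x) ->
  g ^+ 6 * gamma (box_pair x) ^+ 2 * (g ^+ 2) ^+ i
    <= eps * (eps / K) * (gamma (box_pair x) ^+ 2) ^+ i.

Let p1_gt0 : (0 < p.1)%N. Proof. by case: (vT Tp). Qed.
Let p2_gt0 : (0 < p.2)%N. Proof. by case: (vT Tp). Qed.

Lemma hit_by_rival_in_box N i n :
  (forall q n, T q -> ~~ in_box q -> (n <= N)%N -> ~ hit q n i.+2) ->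
  (0 < n)%N -> (n <= N)%N -> (walkU p.1 p.2 i.+2 * walkV p.1 p.2 i.+2 < n)%N ->
  ~ in_E T [set p] n -> exists x : box, rival (box_pair x) /\ hit (box_pair x) n i.+2.
Proof.
move=> no_far_hit n_gt0 le_nN lt_Mn not_E.
have hit_p : hit p n i.+2.
  apply/hitE/frobenius_pos_comb => //; first exact: walkU_gt0.
    exact: walkV_gt0.
  by apply: coprime_walkUV; case: (vT Tp).
have [[a b] [[Tq q_neq] hit_q]] : exists q, rival q /\ hit q n i.+2.
  apply: contrapT => no_rival; apply/not_E/(in_E_unique_hit vT Tp n_gt0 hit_p).
  by move=> q Tq q_neq hit_q; apply: no_rival; exists q.
have /andP[a_le b_le] : in_box (a, b).
  by apply: contrapT => /negP far; exact: no_far_hit (a, b) n Tq far le_nN hit_q.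
by exists (Ordinal (a_le : (a < A.+1)%N), Ordinal (b_le : (b < (A ^ 2).+1)%N)).
Qed.

Lemma count_E_lower N i :
  (forall q n, T q -> ~~ in_box q -> (n <= N)%N -> ~ hit q n i.+2) ->
  (N <= count_E T [set p] N + walkU p.1 p.2 i.+2 * walkV p.1 p.2 i.+2
        + \sum_(x : box) rival_hits x N i.+2)%N.
Proof.
move=> no_far_hit; set M := (_ * _)%N.
have cover n : (0 < n)%N -> (n <= N)%N -> (1 <= `[< in_E T [set p] n >] + (n <= M)
    + \sum_(x : box) `[< rival (box_pair x) /\ hit (box_pair x) n i.+2 >])%N.
  move=> n_gt0 le_nN; case: (leqP n M) => [_|lt_Mn]; first by rewrite addnAC leq_addl.
  case: (asboolP (in_E T [set p] n)) => [//|not_E].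
  have [x [rival_x hit_x]] := hit_by_rival_in_box no_far_hit n_gt0 le_nN lt_Mn not_E.
  by rewrite (bigD1 x) //= asboolT.
have count_small := sum_leq_indicator_le N M.
rewrite /count_E big_mkcond /= /rival_hits exchange_big /=.
apply: leq_trans (_ : \sum_(1 <= n < N.+1) (`[< in_E T [set p] n >] + (n <= M)
    + \sum_(x : box) `[< rival (box_pair x) /\ hit (box_pair x) n i.+2 >]) <= _)%N.
  rewrite {1}(_ : N = \sum_(1 <= n < N.+1) 1)%N; last by rewrite sum_nat_const_nat subn1 muln1.
  rewrite big_nat [X in (_ <= X)%N]big_nat.
  by apply: leq_sum => n /andP[n_gt0 lt_nN]; apply: cover.
by rewrite !big_split /= leq_add2r leq_add.
Qed.

Lemma rival_gamma_gt q : rival q -> g < gamma q.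
Proof.
move=> [Tq q_neq]; rewrite lt_neqAle gamma_min // andbT.
by apply/eqP => eq_g; exact/q_neq/gamma_uniq.
Qed.

Lemma no_far_hit (eps : R) i N : 0 < eps -> g ^+ 3 <= eps * g ^+ i ->
  eps * N%:R < g ^+ 6 * (g ^+ 2) ^+ i ->
  forall q n, T q -> ~~ in_box q -> (n <= N)%N -> ~ hit q n i.+2.
Proof.
move=> eps_gt0 g3_le N_lt q n Tq far le_nN [a1 [a2 [a1_gt0 a2_gt0 walk_n]]].
have [q1_gt0 q2_gt0 _] := vT Tq; set c := gamma q : R.
have g3_le_c : g ^+ 3 <= c := gamma_exp3_le R far.
have c_gt0 : 0 < c := gamma_gt0 R q1_gt0.
have c_le_n : c ^+ i.+1 <= n%:R.
  by have := gamma_exp_le_walk R q1_gt0 i.+2 a1_gt0 a2_gt0; rewrite walk_n exprS ler_pM2l.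
have gi_le : g ^+ 6 * (g ^+ 2) ^+ i <= eps * (g ^+ 3) ^+ i.+1.
  have -> : g ^+ 6 * (g ^+ 2) ^+ i = g ^+ 3 * (g ^+ 2) ^+ i * g ^+ 3.
    by rewrite -!exprM -!exprD; congr (_ ^+ _); lia.
  have -> : (g ^+ 3) ^+ i.+1 = g ^+ 3 * (g ^+ 2) ^+ i * g ^+ i.
    by rewrite -!exprM -!exprD; congr (_ ^+ _); lia.
  by rewrite [X in _ <= X]mulrCA ler_wpM2l // mulr_ge0 ?exprn_ge0 ?gamma_ge0.
have g3_le_N : (g ^+ 3) ^+ i.+1 <= N%:R.
  apply: le_trans (_ : c ^+ i.+1 <= _).
    by rewrite lerXn2r ?nnegrE ?exprn_ge0 ?gamma_ge0 ?(ltW c_gt0).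
  by apply: le_trans c_le_n _; rewrite ler_nat.
have := lt_le_trans (lt_le_trans N_lt gi_le) (ler_wpM2l (ltW eps_gt0) g3_le_N).
by rewrite ltxx.
Qed.

Lemma rival_hits_le (eps d : R) i N x : 0 < eps -> 0 <= d ->
  (rival (box_pair x) ->
    g ^+ 6 * gamma (box_pair x) ^+ 2 * (g ^+ 2) ^+ i <= eps * d * (gamma (box_pair x) ^+ 2) ^+ i) ->
  eps * N%:R < g ^+ 6 * (g ^+ 2) ^+ i -> (rival_hits x N i.+2)%:R <= d * N%:R.
Proof.
move=> eps_gt0 d_ge0 close N_lt.
have [[Tq q_neq]|not_rival] := pselect (rival (box_pair x)); last first.
  by rewrite /rival_hits big1 ?mulr_ge0 // => n _; rewrite asboolF // => -[].
move: close (Tq) => /(_ (conj Tq q_neq)); set q := box_pair x => close /vT[q1_gt0 q2_gt0 _].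
set c := gamma q : R; have c_gt0 : 0 < c := gamma_gt0 R q1_gt0.
have H_le : (rival_hits x N i.+2 <= \sum_(1 <= n < N.+1 | `[< hit q n i.+2 >]) 1)%N.
  by rewrite big_mkcond; apply: leq_sum => n _; case: asboolP => // -[_ /asboolT ->].
have H_count : (rival_hits x N i.+2)%:R * (c ^+ 2) ^+ i <= N%:R ^+ 2 * c ^+ 2.
  apply: le_trans (count_hit_le R N i q1_gt0 q2_gt0).
  by apply: ler_wpM2r; [exact: exprn_ge0 (sqr_ge0 c) | rewrite ler_nat].
set H := (rival_hits _ _ _)%:R in H_count *; set X := (c ^+ 2) ^+ i in close H_count *.
have X_gt0 : 0 < X by rewrite !exprn_gt0.
rewrite -(ler_pM2r (mulr_gt0 eps_gt0 X_gt0)).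
apply: le_trans (_ : N%:R * (g ^+ 6 * c ^+ 2 * (g ^+ 2) ^+ i) <= _).
  apply: le_trans (_ : eps * (N%:R ^+ 2 * c ^+ 2) <= _).
    rewrite [Z in Z <= _]mulrCA; apply: ler_wpM2l => //; exact: ltW.
  have -> : eps * (N%:R ^+ 2 * c ^+ 2) = N%:R * c ^+ 2 * (eps * N%:R) by ring.
  have -> : g ^+ 6 * c ^+ 2 * (g ^+ 2) ^+ i = c ^+ 2 * (g ^+ 6 * (g ^+ 2) ^+ i) by ring.
  rewrite [Z in _ <= Z]mulrA; apply: ler_wpM2l; [by rewrite mulr_ge0 ?sqr_ge0 | exact: ltW].
have -> : d * N%:R * (eps * X) = N%:R * (eps * d * X) by ring.
by apply: ler_wpM2l.
Qed.

Lemma count_E_at_scale (eps : R) i N : 0 < eps -> g ^+ 3 <= eps * g ^+ i ->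
  rivals_dominated eps i ->
  g ^+ 4 * (g ^+ 2) ^+ i <= eps * N%:R -> eps * N%:R < g ^+ 6 * (g ^+ 2) ^+ i ->
  (1 - 2 * eps) * N%:R <= (count_E T [set p] N)%:R.
Proof.
move=> eps_gt0 far close M_le N_lt.
have lower := count_E_lower (no_far_hit eps_gt0 far N_lt).
rewrite -(ler_nat R) !natrD natrM [X in _ + X]natr_sum in lower.
have walks_small : (walkU p.1 p.2 i.+2)%:R * (walkV p.1 p.2 i.+2)%:R <= eps * N%:R.
  apply: le_trans M_le; rewrite (_ : g ^+ 4 * _ = g ^+ i.+2 * g ^+ i.+2); last first.
    by rewrite -!exprM -!exprD; congr (_ ^+ _); lia.
  by apply: ler_pM => //; [exact: walkU_le | exact: walkV_le].
have rivals_small : \sum_(x : box) (rival_hits x N i.+2)%:R <= eps * N%:R.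
  apply: le_trans (_ : \sum_(x : box) eps / K * N%:R <= _).
    apply: ler_sum => x _; apply: rival_hits_le (close x) N_lt => //.
    by rewrite divr_ge0 ?ltW.
  by rewrite sumr_const card_prod !card_ord -[_ *+ _]mulr_natr -/K mulrAC divfK // gt_eqF.
lra.
Qed.

Lemma density_lower (eps : R) : 0 < eps ->
  \forall N \near \oo, (1 - 2 * eps) * N%:R <= (count_E T [set p] N)%:R.
Proof.
move=> eps_gt0; have g_gt1 : 1 < g := gamma_gt1 R p1_gt0 p2_gt0.
have g_gt0 : 0 < g := gamma_gt0 R p1_gt0.
have d_gt0 : 0 < eps * (eps / K) by rewrite !mulr_gt0 ?invr_gt0.
have far : \forall i \near \oo, g ^+ 3 <= eps * g ^+ i.
  apply: filterS (near_mulr_exp_le ler01 g_gt1 (exprn_gt0 3 g_gt0) eps_gt0) => i.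
  by rewrite expr1n mulr1.
have close : \forall i \near \oo, rivals_dominated eps i.
  apply: filter_forall => x; have [rival_x|] := pselect (rival (box_pair x)); last first.
    by move=> not_rival; apply: nearW => i /not_rival.
  have c_gt : g < gamma (box_pair x) := rival_gamma_gt rival_x.
  have c_gt0 : 0 < gamma (box_pair x) :> R by apply: lt_trans c_gt.
  have sqr_lt : g ^+ 2 < gamma (box_pair x) ^+ 2 by rewrite ltr_pXn2r ?nnegrE ?ltW.
  have C_gt0 : 0 < g ^+ 6 * gamma (box_pair x) ^+ 2 by rewrite mulr_gt0 ?exprn_gt0.
  by apply: filterS (near_mulr_exp_le (sqr_ge0 g) sqr_lt C_gt0 d_gt0) => i le_i _.
have [i0 _ far_close] := filterI far close.
have g2_ge2 : 2 <= g ^+ 2 := gamma_sqr_ge2 R p1_gt0 p2_gt0.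
apply: filterS (nbhs_infty_ger (g ^+ 4 * (g ^+ 2) ^+ i0 / eps)) => N N_ge.
have i0_le : (g ^+ 2) ^+ i0 <= eps * N%:R / g ^+ 4.
  move: N_ge; rewrite ler_pdivrMr // ler_pdivlMr ?exprn_gt0 //.
  by rewrite [_ * g ^+ 4]mulrC [eps * _]mulrC.
have [i i0_le_i /andP[le_i lt_iS]] := exists_exp_bracket g2_ge2 i0_le.
have [far_i close_i] := far_close i i0_le_i.
apply: (count_E_at_scale eps_gt0 far_i close_i).
  by rewrite mulrC -ler_pdivlMr ?exprn_gt0.
by move: lt_iS; rewrite ltr_pdivrMr ?exprn_gt0 // [_ * g ^+ 4]mulrC (exprS (g ^+ 2) i) mulrA -exprD.
Qed.

End Density.

Theorem corollary5p3 (R : realType) (T : set (nat * nat)) (p' : nat * nat) :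
  valid T ->
  T p' ->
  (forall q, T q -> gamma p' <= gamma q :> R) ->
  (forall q, T q -> gamma q = gamma p' :> R -> q = p') ->
  (fun n : nat => (count_E T [set p'] n)%:R / n%:R : R) @ \oo --> (1 : R).
Proof.
move=> vT Tp' gamma_min gamma_uniq; apply/cvgrPdist_le => e e_gt0.
have half_gt0 : 0 < e / 2 by rewrite divr_gt0.
have lower := density_lower vT Tp' gamma_min gamma_uniq half_gt0.
apply: filterS (filterI lower (nbhs_infty_gt 0)) => N [le_count N_gt0] /=.
have N_gt0' : 0 < N%:R :> R by rewrite ltr0n.
have le_N : (count_E T [set p'] N)%:R <= N%:R :> R by rewrite ler_nat count_E_le.
have ratio_ge : 1 - e <= (count_E T [set p'] N)%:R / N%:R :> R.
  by rewrite ler_pdivlMr //; apply: le_trans le_count; rewrite ler_wpM2r //; lra.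
have ratio_le : (count_E T [set p'] N)%:R / N%:R <= 1 :> R by rewrite ler_pdivrMr // mul1r.
by rewrite ger0_norm ?subr_ge0 //; lra.
Qed.
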